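(* Let $J_1,J_2$ be Möbius involutions of $\overline{\mathbb{C}}$ and $q_1,q_2$ polynomials of degree $d+1$. If the correspondences $J_1\circ\mathrm{Cov}_0^{q_1}$ and $J_2\circ\mathrm{Cov}_0^{q_2}$ are conformally conjugate, then $J_1$ and $J_2$ are conformally conjugate, and $q_1$ and $q_2$ are conformal covering equivalent.
   Context: Correspondences are subsets of $\overline{\mathbb{C}}\times\overline{\mathbb{C}}$; composition $G\circ F=\{(z,w):\exists v,(z,v)\in F,(v,w)\in G\}$; a map is identified with its graph. Conformal conjugacy of correspondences $F_1,F_2$: $F_2=\phi\circ F_1\circ\phi^{-1}$ for a Möbius map $\phi$. Deleted covering correspondence of a rational $q$: $\mathrm{Cov}_0^q=\{(z,w):(q(z)-q(w))/(z-w)=0\}$ (i.e. $\{q(z)=q(w)\}$ with one copy of the diagonal removed). Rational maps $q_1,q_2$ are conformal covering equivalent if there are Möbius maps $\phi,\psi$ with $q_2=\psi\circ q_1\circ\phi$. *)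

From HB Require Import structures.
From mathcomp Require Import all_boot all_order all_algebra.
From mathcomp Require Import complex.
From mathcomp Require Import reals.
Set Implicit Arguments. Unset Strict Implicit. Unset Printing Implicit Defensive.
Import Order.TTheory GRing.Theory Num.Theory.
Local Open Scope ring_scope.

Section Sphere.
Variable R : realType.
Definition C := R[i].

(* The Riemann sphere: Some z = finite point z, None = infinity. *)
Definition sphere := option C.

Definition corr := sphere -> sphere -> Prop.

Definition corr_comp (G F : corr) : corr :=
  fun z w => exists v, F z v /\ G v w.

Definition graph (f : sphere -> sphere) : corr := fun z w => f z = w.

Definition corr_eq (F G : corr) : Prop := forall z w, F z w <-> G z w.

Record mobius := Mobius {
  mob_a : C; mob_b : C; mob_c : C; mob_d : C;
  mob_det : mob_a * mob_d - mob_b * mob_c != 0 }.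

Definition mob_app (m : mobius) (z : sphere) : sphere :=
  let: Mobius a b c d _ := m in
  match z with
  | None => if c == 0 then None else Some (a / c)
  | Some x => if c * x + d == 0 then None else Some ((a * x + b) / (c * x + d))
  end.

Definition graph_inv (phi : mobius) : corr := fun z w => mob_app phi w = z.

Definition mob_conj_corr (phi : mobius) (F : corr) : corr :=
  corr_comp (graph (mob_app phi)) (corr_comp F (graph_inv phi)).

Definition conformally_conjugate (F1 F2 : corr) : Prop :=
  exists phi : mobius, corr_eq F2 (mob_conj_corr phi F1).

Definition mob_involution (J : mobius) : Prop :=
  (forall z, mob_app J (mob_app J z) = z) /\ ~ (forall z, mob_app J z = z).

Definition poly_sphere (q : {poly C}) (z : sphere) : sphere :=
  match z with None => None | Some x => Some q.[x] end.

(* Deleted covering correspondence: zero set in the sphere x sphere of the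
   divided difference (q z - q w)/(z - w); on the diagonal this quotient is
   q'(z); at infinity the only point of the (closed) zero set is (oo,oo),
   present exactly when deg q >= 2. *)
Definition Cov0 (q : {poly C}) : corr := fun z w =>
  match z, w with
  | Some x, Some y => (x != y /\ q.[x] = q.[y]) \/ (x = y /\ (q^`()).[x] = 0)
  | None, None => (2 < size q)%N
  | _, _ => False
  end.

Definition covering_equivalent (q1 q2 : {poly C}) : Prop :=
  exists phi psi : mobius, forall z,
    poly_sphere q2 z = mob_app psi (poly_sphere q1 (mob_app phi z)).

End Sphere.

(* Every Möbius involution has two fixed points; sending them to [0] and [oo]
   conjugates it to [z |-> -z], so any two involutions are conjugate.
   Now let [phi] conjugate [J1 o Cov0 q1] to [J2 o Cov0 q2].  If [x], [x'], [y]
   are distinct points of one fibre of [q1], then [(x, y)] and [(x', y)] lie in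
   [Cov0 q1], so [q2 (phi x)] and [q2 (phi x')] both equal [q2 v] for the unique
   [v] with [J2 v = phi (J1 y)].  Hence, once [deg q1 >= 3], the rational
   function [q2 o phi = P / D] is constant on every generic fibre [q1 = s], and
   [P - k D] is then a multiple of [q1 - s].  Two such relations express [P]
   and [D] as affine functions of [q1], i.e. [q2 o phi = psi o q1] with [psi]
   Möbius.  Quadratic polynomials are all equivalent by completing the square. *)

From HB Require Import structures.
From mathcomp Require Import all_boot all_order all_algebra.
From mathcomp Require Import complex reals.
From mathcomp Require Import separable ring zify.
Import GRing.Theory Num.Theory.
Local Open Scope ring_scope.

Set Implicit Arguments. Unset Strict Implicit. Unset Printing Implicit Defensive.

Lemma coefM_size_leq (S : nzRingType) (p q : {poly S}) i j :
  (size p <= i.+1)%N -> (size q <= j.+1)%N -> (p * q)`_(i + j) = p`_i * q`_j.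
Proof.
move=> sp sq; have hi : (i < (i + j).+1)%N by rewrite ltnS leq_addr.
rewrite coefM (bigD1 (Ordinal hi)) //= addKn big1 ?addr0 // => k.
rewrite -val_eqE /=; case: (ltngtP k i) => // [ki|ik] _.
  by rewrite [q`__]nth_default ?mulr0 //; apply: leq_trans sq _; lia.
by rewrite nth_default ?mul0r //; apply: leq_trans sp _; lia.
Qed.

Lemma coef_size_pred_neq0 (S : nzRingType) (q : {poly S}) m : size q = m.+1 -> q`_m != 0.
Proof. by move=> sq; rewrite -[m]/(m.+1.-1) -sq -lead_coefE lead_coef_eq0 -size_poly_eq0 sq. Qed.

Lemma size_linear (S : nzRingType) (a b : S) : (size (a%:P * 'X + b%:P)%R <= 2)%N.
Proof. by rewrite size_MXaddC size_polyC; case: ifP => // _; case: (a != 0). Qed.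

Lemma coef1_linear (S : nzRingType) (a b : S) : (a%:P * 'X + b%:P)`_1 = a.
Proof. by rewrite coefD coefMX !coefC /= addr0. Qed.

Lemma size_exp_linear (S : nzRingType) (p : {poly S}) k :
  (size p <= 2)%N -> (size (p ^+ k) <= k.+1)%N.
Proof.
move=> sp; apply: leq_trans (size_poly_exp_leq _ _) _.
by rewrite ltnS; nia.
Qed.

Lemma coef_exp_linear (S : nzRingType) (p : {poly S}) k :
  (size p <= 2)%N -> (p ^+ k)`_k = p`_1 ^+ k.
Proof.
move=> sp; elim: k => [|k IHk]; first by rewrite !expr0 coefC.
by rewrite !exprSr -addn1 coefM_size_leq ?size_exp_linear // IHk.
Qed.

Lemma exists_mem_notin (T : eqType) (s t : seq T) :
  uniq s -> (size t < size s)%N -> exists2 y, y \in s & y \notin t.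
Proof.
move=> uniq_s lt_ts; have /hasP[y ys yt] : has [predC t] s.
  apply: contraLR lt_ts => /hasPn sub_st; rewrite -leqNgt.
  by apply: uniq_leq_size => // y /sub_st /negPn.
by exists y.
Qed.

Lemma deriv_neq0 (S : numDomainType) (p : {poly S}) : (1 < size p)%N -> p^`() != 0.
Proof.
move=> sp; apply/eqP => /(congr1 (coefp (size p).-2))/eqP.
rewrite /= coef_deriv coef0.
have -> : ((size p).-2.+1 = (size p).-1)%N by case: (size p) sp => [|[]].
rewrite mulrn_eq0 -lead_coefE lead_coef_eq0 -size_poly_eq0.
by case: (size p) sp => [|[]].
Qed.

Lemma exists_notin (F : closedFieldType) (s : seq F) : exists x, x \notin s.
Proof.
have /closed_nonrootP[x] : \prod_(y <- s) ('X - y%:P) != 0.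
  by rewrite -size_poly_eq0 size_prod_XsubC.
by rewrite root_prod_XsubC; exists x.
Qed.

Lemma poly_eq0_except (F : closedFieldType) (p : {poly F}) t0 :
  (forall t, t != t0 -> p.[t] = 0) -> p = 0.
Proof.
move=> hp; apply/eqP/negPn/negP => p_neq0.
have /closed_nonrootP[t] : p * ('X - t0%:P) != 0 by rewrite mulf_neq0 ?polyXsubC_eq0.
by rewrite rootM root_XsubC negb_or => /andP[/rootP pt /hp].
Qed.

Lemma root_values_finite (F : closedFieldType) (p g : {poly F}) : g != 0 ->
  exists B : seq F, forall z, root g z -> p.[z] \in B.
Proof.
move=> g_neq0; have [rs ->] := closed_field_poly_normal g.
exists [seq p.[z] | z <- rs] => z; rewrite rootZ ?lead_coef_eq0 //.
by rewrite root_prod_XsubC => /(map_f (horner p)).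
Qed.

Lemma separable_sub_noncritical (F : closedFieldType) (p : {poly F}) s :
  (forall z, root p^`() z -> p.[z] != s) -> separable_poly (p - s%:P).
Proof.
move=> hs; rewrite unlock /separable_poly coprimep_def derivB derivC subr0.
apply: contraT => /closed_rootP[z]; rewrite root_gcd => /andP[/rootP].
by rewrite hornerD hornerN hornerC => /eqP; rewrite subr_eq0 => /eqP pz /hs; rewrite pz eqxx.
Qed.

Lemma separable_normal (F : closedFieldType) (p : {poly F}) : separable_poly p ->
  exists2 rs : seq F, uniq rs & p = lead_coef p *: \prod_(r <- rs) ('X - r%:P).
Proof.
move=> sep_p; have [rs def_p] := closed_field_poly_normal p; exists rs => //.
have [p0|p_neq0] := eqVneq p 0.
  by move: sep_p; rewrite p0 unlock /separable_poly deriv0 coprimep0 -size_poly_eq1 size_poly0.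
have lc_neq0 : lead_coef p != 0 by rewrite lead_coef_eq0.
by rewrite -separable_prod_XsubC -(eqp_separable (eqp_scale _ lc_neq0)) -def_p.
Qed.

Lemma eq_scale_prod_XsubC (F : fieldType) (q : {poly F}) (rs : seq F) :
  uniq rs -> (size q <= (size rs).+1)%N -> all (root q) rs ->
  exists l, q = l *: \prod_(r <- rs) ('X - r%:P).
Proof.
move=> uniq_rs sq roots_q; set pr := \prod_(r <- rs) _.
have pr_neq0 : pr != 0 by rewrite -size_poly_eq0 size_prod_XsubC.
have dvd_pr : pr %| q by apply: uniq_roots_dvdp; rewrite ?uniq_rootsE.
have sh : (size (q %/ pr)%R <= 1)%N by rewrite size_divp // size_prod_XsubC leq_subLR addn1.
by exists (q %/ pr)`_0; rewrite -mul_polyC -(size1_polyC sh) divpK.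
Qed.

Section Mobius.
Variable R : realType.
Implicit Types (m J : mobius R) (x : C R) (z : sphere R).

Lemma mob_app_Some m x : mob_app m (Some x) =
  if mob_c m * x + mob_d m == 0 then None
  else Some ((mob_a m * x + mob_b m) / (mob_c m * x + mob_d m)).
Proof. by case: m. Qed.

Lemma mob_app_None m : mob_app m None =
  if mob_c m == 0 then None else Some (mob_a m / mob_c m).
Proof. by case: m. Qed.

Lemma mob_num_neq0_at_pole m x :
  mob_c m * x + mob_d m = 0 -> mob_a m * x + mob_b m != 0.
Proof.
case: m => a b c d /= det hc; apply: contra_neq det => ha.
have -> : d = - (c * x) by apply/eqP; rewrite -addr_eq0 addrC hc.
have -> : b = - (a * x) by apply/eqP; rewrite -addr_eq0 addrC ha.
ring.
Qed.

Definition mob_mul m1 m2 : mobius R.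
Proof.
case: m1 m2 => [a1 b1 c1 d1 h1] [a2 b2 c2 d2 h2].
refine (@Mobius R (a1 * a2 + b1 * c2) (a1 * b2 + b1 * d2)
                  (c1 * a2 + d1 * c2) (c1 * b2 + d1 * d2) _).
have -> : (a1 * a2 + b1 * c2) * (c1 * b2 + d1 * d2)
          - (a1 * b2 + b1 * d2) * (c1 * a2 + d1 * c2)
        = (a1 * d1 - b1 * c1) * (a2 * d2 - b2 * c2) by ring.
exact: mulf_neq0.
Defined.

Lemma mob_mulE m1 m2 z : mob_app (mob_mul m1 m2) z = mob_app m1 (mob_app m2 z).
Proof.
case: m1 m2 => [a1 b1 c1 d1 h1] [a2 b2 c2 d2 h2] /=.
case: z => [x|] /=.
- have [hx|hx] := eqVneq (c2 * x + d2) 0.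
  + have /= hn := @mob_num_neq0_at_pole (Mobius h2) x hx.
    have -> : (c1 * a2 + d1 * c2) * x + (c1 * b2 + d1 * d2)
            = c1 * (a2 * x + b2) + d1 * (c2 * x + d2) by ring.
    have -> : (a1 * a2 + b1 * c2) * x + (a1 * b2 + b1 * d2)
            = a1 * (a2 * x + b2) + b1 * (c2 * x + d2) by ring.
    rewrite hx !mulr0 !addr0 mulf_eq0 (negbTE hn) orbF /=.
    have [//|hc1] := eqVneq c1 0.
    by congr Some; field; rewrite hc1 hn.
  + set y := (a2 * x + b2) / (c2 * x + d2).
    have -> : (c1 * a2 + d1 * c2) * x + (c1 * b2 + d1 * d2)
            = (c2 * x + d2) * (c1 * y + d1) by rewrite /y; field.
    have -> : (a1 * a2 + b1 * c2) * x + (a1 * b2 + b1 * d2)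
            = (c2 * x + d2) * (a1 * y + b1) by rewrite /y; field.
    rewrite mulf_eq0 (negbTE hx) /=.
    by case: eqP => // hy; rewrite -mulf_div divff ?mul1r.
- have [hc2|hc2] := eqVneq c2 0.
  + have ha2 : a2 != 0 by apply: contra_neq h2 => ->; rewrite hc2 !mul0r mulr0 subrr.
    rewrite hc2 mulr0 addr0 mulf_eq0 (negbTE ha2) orbF.
    have [//|hc1] := eqVneq c1 0.
    by congr Some; rewrite mulr0 addr0; field; rewrite hc1 ha2.
  + have hE : c1 * a2 + d1 * c2 = c2 * (c1 * (a2 / c2) + d1) by field.
    rewrite [X in X == 0]hE mulf_eq0 (negbTE hc2) /=.
    have [//|hy] := eqVneq (c1 * (a2 / c2) + d1) 0.
    by congr Some; field; rewrite hc2 hE mulf_neq0.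
Qed.

Lemma mob_app_scale m m' k : k != 0 ->
  mob_a m' = k * mob_a m -> mob_b m' = k * mob_b m ->
  mob_c m' = k * mob_c m -> mob_d m' = k * mob_d m ->
  mob_app m' =1 mob_app m.
Proof.
move=> hk ha hb hc hd [x|]; rewrite !(mob_app_Some, mob_app_None) ha ?hb hc ?hd.
- rewrite -mulrA -mulrDr mulf_eq0 (negbTE hk) /=.
  have [//|hx] := eqVneq (mob_c m * x + mob_d m) 0.
  by congr Some; field; rewrite hk hx.
- rewrite mulf_eq0 (negbTE hk) /=.
  have [//|hc0] := eqVneq (mob_c m) 0.
  by congr Some; field; rewrite hk hc0.
Qed.

Lemma mob_app_scalar m : mob_b m = 0 -> mob_c m = 0 -> mob_a m = mob_d m ->
  mob_app m =1 id.
Proof.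
case: m => a b c d det /= hb hc ha [x|] /=; last by rewrite hc eqxx.
have hd : d != 0 by apply: contra_neq det => hd; rewrite ha hd hb hc !mul0r subrr.
by rewrite hb hc mul0r add0r (negbTE hd) addr0 ha; congr Some; field.
Qed.

Lemma mob_app_id_scalar m : mob_app m =1 id ->
  [/\ mob_b m = 0, mob_c m = 0 & mob_a m = mob_d m].
Proof.
case: m => a b c d det /= Hid.
have hc : c = 0 by move: (Hid None) => /=; case: eqP.
have hd : d != 0 by apply: contra_neq (det) => ->; rewrite hc !mulr0 subrr.
move: (Hid (Some 0)) (Hid (Some 1)) => /=.
rewrite hc !mul0r !add0r (negbTE hd) mulr0 add0r mulr1 => -[hb] [ha].
have hb0 : b = 0 by move: hb => /eqP; rewrite mulf_eq0 invr_eq0 (negbTE hd) orbF => /eqP.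
by split=> //; move: ha; rewrite hb0 addr0 => /(canRL (divfK hd)); rewrite mul1r.
Qed.

Definition mob_inv m : mobius R.
Proof.
case: m => a b c d det; refine (@Mobius R d (- b) (- c) a _).
by have -> : d * a - - b * - c = a * d - b * c by ring.
Defined.

Lemma mob_invK m : cancel (mob_app (mob_inv m)) (mob_app m).
Proof. by move=> z; rewrite -mob_mulE; apply: mob_app_scalar; case: m => * /=; ring. Qed.

Lemma mob_invKV m : cancel (mob_app m) (mob_app (mob_inv m)).
Proof. by move=> z; rewrite -mob_mulE; apply: mob_app_scalar; case: m => * /=; ring. Qed.

Lemma mob_app_onto m t : Some t != mob_app m None ->
  exists x, mob_app m (Some x) = Some t.
Proof.
case E: (mob_app (mob_inv m) (Some t)) => [x|].
  by exists x; rewrite -E mob_invK.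
by rewrite -{1}(mob_invK m (Some t)) E eqxx.
Qed.

Lemma conformally_conjugate_graph phi (f g : sphere R -> sphere R) :
  (forall z, mob_app phi (f z) = g (mob_app phi z)) ->
  conformally_conjugate (graph f) (graph g).
Proof.
move=> hcomm; exists phi => z w; split.
- move=> <-; exists (f (mob_app (mob_inv phi) z)); split.
    by exists (mob_app (mob_inv phi) z); split=> //; apply: mob_invK.
  by rewrite /graph hcomm mob_invK.
- by case=> _ [[u [<- <-]] <-]; rewrite /graph hcomm.
Qed.

Lemma mob_involution_trace J : mob_involution J -> mob_d J = - mob_a J.
Proof.
case=> HJ Hn; have /mob_app_id_scalar[] : mob_app (mob_mul J J) =1 id.
  by move=> z; rewrite mob_mulE HJ.
move: Hn; case: J {HJ} => a b c d det Hn /= hb hc ha.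
have [/eqP|hs] := eqVneq (a + d) 0; first by rewrite addrC addr_eq0 => /eqP.
suff [b0 c0 ad] : [/\ b = 0, c = 0 & a = d] by case: Hn; apply: mob_app_scalar.
split; apply: (mulIf hs); rewrite ?mul0r.
- by rewrite -hb; ring.
- by rewrite -hc; ring.
- apply/eqP; rewrite -subr_eq0; apply/eqP.
  by transitivity ((a * a + b * c) - (c * b + d * d)); [ring | rewrite ha subrr].
Qed.

Lemma mob_neg_det : (1 : C R) * -1 - 0 * 0 != 0.
Proof. by rewrite mulr0 subr0 mul1r oppr_eq0 oner_eq0. Qed.

Definition mob_neg : mobius R := Mobius mob_neg_det.

Lemma mob_involution_conj_neg J : mob_involution J ->
  exists g : mobius R, forall z, mob_app J (mob_app g z) = mob_app g (mob_app mob_neg z).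
Proof.
move=> /mob_involution_trace; case: J => a b c d det hd; rewrite /= in hd; subst d.
have two_neq0 : (2 : C R) != 0 by rewrite pnatr_eq0.
(* [g] maps [0] and [oo], the fixed points of [z |-> -z], to those of [J]:
   to [-b / (2 a)] and [oo] if [c = 0], to [(a -+ sqrt (a^2 + b c)) / c] otherwise. *)
have [c0|c_neq0] := eqVneq c 0.
- have a_neq0 : a != 0 by apply: contra_neq det => ->; rewrite c0 mul0r mulr0 subrr.
  have det' : (1 : C R) * - (2 * a) - b * 0 != 0.
    by rewrite mulr0 subr0 mul1r oppr_eq0 mulf_neq0.
  exists (Mobius det') => z; rewrite -!mob_mulE.
  by apply: (mob_app_scale a_neq0); rewrite /= ?c0; ring.
- pose mu := sqrtC (a * a + b * c).
  have mu2 : mu ^+ 2 = a * a + b * c by rewrite sqrtCK.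
  have mu_neq0 : mu != 0.
    apply: contra_neq det => mu0; move: mu2; rewrite mu0 expr0n /= => mu2.
    have -> : a * - a - b * c = - (a * a + b * c) by ring.
    by rewrite -mu2 oppr0.
  have det' : (a + mu) * c - (a - mu) * c != 0.
    have -> : (a + mu) * c - (a - mu) * c = 2 * (c * mu) by ring.
    by rewrite !mulf_neq0.
  exists (Mobius det') => z; rewrite -!mob_mulE.
  have bc : b * c = mu ^+ 2 - a * a by rewrite mu2; ring.
  by apply: (mob_app_scale mu_neq0); rewrite /= ?bc; ring.
Qed.

Lemma mob_involution_conjugate J1 J2 : mob_involution J1 -> mob_involution J2 ->
  conformally_conjugate (graph (mob_app J1)) (graph (mob_app J2)).
Proof.
move=> /mob_involution_conj_neg[g1 Hg1] /mob_involution_conj_neg[g2 Hg2].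
apply: (@conformally_conjugate_graph (mob_mul g2 (mob_inv g1))) => z.
by rewrite !mob_mulE -{1}(mob_invK g1 z) Hg1 mob_invKV Hg2.
Qed.

End Mobius.

Section Pullback.
Variables (R : realType) (phi : mobius R) (n : nat).
Implicit Types (q : {poly C R}) (x : C R).

Definition mob_num : {poly C R} := (mob_a phi)%:P * 'X + (mob_b phi)%:P.
Definition mob_den : {poly C R} := (mob_c phi)%:P * 'X + (mob_d phi)%:P.

(* For [size q <= n.+1], [q \o phi = pullback_num q / mob_den ^+ n]. *)
Definition pullback_num q : {poly C R} :=
  \sum_(j < n.+1) q`_j *: (mob_num ^+ j * mob_den ^+ (n - j)).

(* The rational map [P / D] on the sphere, for [P], [D] of degree at most [m]
   without common zero; at infinity it is the ratio of the [X^m]-coefficients. *)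
Definition frac_sphere (m : nat) (P D : {poly C R}) (z : sphere R) : sphere R :=
  match z with
  | Some x => if D.[x] == 0 then None else Some (P.[x] / D.[x])
  | None => if D`_m == 0 then None else Some (P`_m / D`_m)
  end.

Lemma horner_mob_num x : mob_num.[x] = mob_a phi * x + mob_b phi.
Proof. by rewrite /mob_num !hornerE. Qed.

Lemma horner_mob_den x : mob_den.[x] = mob_c phi * x + mob_d phi.
Proof. by rewrite /mob_den !hornerE. Qed.

Lemma size_mob_num : (size mob_num <= 2)%N. Proof. exact: size_linear. Qed.
Lemma size_mob_den : (size mob_den <= 2)%N. Proof. exact: size_linear. Qed.

Lemma mob_den_neq0 : mob_den != 0.
Proof.
apply: contra_neq (mob_det phi) => den0.
have c0 : mob_c phi = 0.
  by have := congr1 (coefp 1) den0; rewrite /= /mob_den coef1_linear coef0.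
have d0 : mob_d phi = 0.
  by have := congr1 (coefp 0) den0; rewrite /= coefD coefMX !coefC /= add0r.
by rewrite c0 d0 !mulr0 subrr.
Qed.

Lemma mob_app_SomeE x : mob_app phi (Some x) =
  if mob_den.[x] == 0 then None else Some (mob_num.[x] / mob_den.[x]).
Proof. by rewrite mob_app_Some horner_mob_num horner_mob_den. Qed.

Lemma horner_pullback_num q x : (size q <= n.+1)%N -> mob_den.[x] != 0 ->
  (pullback_num q).[x] = mob_den.[x] ^+ n * q.[mob_num.[x] / mob_den.[x]].
Proof.
move=> sq den_neq0; rewrite (horner_coef_wide _ sq) mulr_sumr horner_sum.
apply: eq_bigr => j _; rewrite hornerZ hornerM !horner_exp expr_div_n.
have -> : mob_den.[x] ^+ n = mob_den.[x] ^+ (n - j) * mob_den.[x] ^+ j.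
  by rewrite -exprD subnK // -ltnS.
by field; rewrite expf_neq0.
Qed.

Lemma size_pullback_num q : (size (pullback_num q) <= n.+1)%N.
Proof.
apply: (big_ind (fun p : {poly C R} => size p <= n.+1)%N) => [|p r hp hr|[j /= jn] _].
- by rewrite size_poly0.
- by apply: leq_trans (size_polyD _ _) _; rewrite geq_max hp hr.
- apply: leq_trans (size_scale_leq _ _) _; apply: leq_trans (size_polyMleq _ _) _.
  have h1 := size_exp_linear j size_mob_num.
  have h2 := size_exp_linear (n - j) size_mob_den.
  by rewrite -subn1 leq_subLR; apply: leq_trans (leq_add h1 h2) _; lia.
Qed.

Lemma coef_pullback_num q : (size q <= n.+1)%N -> mob_c phi != 0 ->
  (pullback_num q)`_n = mob_c phi ^+ n * q.[mob_a phi / mob_c phi].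
Proof.
move=> sq c_neq0; rewrite (horner_coef_wide _ sq) mulr_sumr coef_sum.
apply: eq_bigr => -[j /= jn] _; rewrite ltnS in jn.
rewrite coefZ -[in X in _`_X](subnKC jn).
rewrite coefM_size_leq ?size_exp_linear ?size_mob_num ?size_mob_den //.
rewrite !coef_exp_linear ?size_mob_num ?size_mob_den // !coef1_linear expr_div_n.
have -> : mob_c phi ^+ n = mob_c phi ^+ (n - j) * mob_c phi ^+ j by rewrite -exprD subnK.
by field; rewrite expf_neq0.
Qed.

Lemma root_pullback_num_sub q k x : (size q <= n.+1)%N -> mob_den.[x] != 0 ->
  q.[mob_num.[x] / mob_den.[x]] = k -> root (pullback_num q - k *: mob_den ^+ n) x.
Proof.
move=> sq den_neq0 qk; apply/rootP.
by rewrite hornerD hornerN hornerZ horner_pullback_num // qk horner_exp; ring.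
Qed.

Lemma coef_mob_den_exp : (mob_den ^+ n)`_n = mob_c phi ^+ n.
Proof. by rewrite coef_exp_linear ?size_mob_den // coef1_linear. Qed.

Lemma poly_sphere_mob_app q : (0 < n)%N -> (size q <= n.+1)%N ->
  forall z, poly_sphere q (mob_app phi z) = frac_sphere n (pullback_num q) (mob_den ^+ n) z.
Proof.
move=> n_gt0 sq [x|] /=.
- rewrite mob_app_SomeE horner_exp expf_eq0 n_gt0 /=.
  have [//|den_neq0] := eqVneq mob_den.[x] 0.
  by rewrite horner_pullback_num //=; congr Some; field; rewrite expf_neq0.
- rewrite mob_app_None coef_mob_den_exp expf_eq0 n_gt0 /=.
  have [//|c_neq0] := eqVneq (mob_c phi) 0.
  by rewrite coef_pullback_num //=; congr Some; field; rewrite expf_neq0.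
Qed.

Lemma pullback_num_eq_scale q k : (size q <= n.+1)%N ->
  pullback_num q = k *: mob_den ^+ n -> q = k%:P.
Proof.
move=> sq hqk; apply/eqP; rewrite -subr_eq0; apply/eqP.
apply: (@poly_eq0_except _ _ (odflt 0 (mob_app phi None))) => t ht.
have [x] : exists x, mob_app phi (Some x) = Some t.
  by apply: mob_app_onto; case: (mob_app phi None) ht => //= t0 /negPf ->.
rewrite mob_app_SomeE; have [//|den_neq0 [<-]] := eqVneq mob_den.[x] 0.
have := congr1 (horner^~ x) hqk; rewrite /= horner_pullback_num // hornerZ horner_exp.
rewrite mulrC => /(mulIf (expf_neq0 n den_neq0)) qk.
by rewrite hornerD hornerN hornerC qk subrr.
Qed.

End Pullback.

Section LevelRelations.
Variables (S : comNzRingType) (P D q : {poly S}).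

Lemma level_relation_horner k l s x : P - k *: D = l *: (q - s%:P) ->
  P.[x] - k * D.[x] = l * (q.[x] - s).
Proof. by move/(congr1 (horner^~ x)); rewrite /= !hornerE. Qed.

Lemma level_relation_coef k l s i : P - k *: D = l *: (q - s%:P) ->
  P`_i - k * D`_i = l * (q`_i - if i == 0%N then s else 0).
Proof. by move/(congr1 (coefp i)); rewrite /= !(coefB, coefZ, coefC). Qed.

End LevelRelations.

Lemma level_constants_neq (F : idomainType) (m : nat) (q P D : {poly F})
    (k1 k2 l1 l2 s1 s2 : F) :
  (0 < m)%N -> size q = m.+1 -> l1 != 0 -> s1 != s2 ->
  P - k1 *: D = l1 *: (q - s1%:P) -> P - k2 *: D = l2 *: (q - s2%:P) -> k1 != k2.
Proof.
move=> m_gt0 sq l1_neq0 s12 h1 h2; apply: contra_neq s12 => k12.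
have L_neq0 := coef_size_pred_neq0 sq.
have l12 : l1 = l2.
  apply: (mulIf L_neq0); have := level_relation_coef m h1; have := level_relation_coef m h2.
  by rewrite (negbTE (lt0n_neq0 m_gt0)) !subr0 k12 => -> ->.
have := level_relation_coef 0 h2; rewrite -k12 (level_relation_coef 0 h1) -l12 /=.
by move/(mulfI l1_neq0)/addrI/oppr_inj.
Qed.

Lemma frac_sphere_eq_mobius_comp (R : realType) (m : nat) (q P D : {poly C R})
    (k1 k2 l1 l2 s1 s2 : C R) :
  (0 < m)%N -> size q = m.+1 -> l1 != 0 -> l2 != 0 -> s1 != s2 ->
  P - k1 *: D = l1 *: (q - s1%:P) -> P - k2 *: D = l2 *: (q - s2%:P) ->
  exists psi : mobius R, forall z, mob_app psi (poly_sphere q z) = frac_sphere m P D z.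
Proof.
move=> m_gt0 sq l1_neq0 l2_neq0 s12 h1 h2.
have k12 : k2 - k1 != 0.
  by rewrite subr_eq0 eq_sym (level_constants_neq m_gt0 sq l1_neq0 s12 h1 h2).
have L_neq0 := coef_size_pred_neq0 sq.
have top k l s : P - k *: D = l *: (q - s%:P) -> P`_m - k * D`_m = l * q`_m.
  by move/(level_relation_coef m); rewrite (negbTE (lt0n_neq0 m_gt0)) subr0.
(* With [F_i w := l_i * (w - s_i)], take [psi w := (k2 F_1 w - k1 F_2 w) / (F_1 w - F_2 w)];
   since [F_i (q x) = P x - k_i D x], this is [P x / D x] at [w = q x]. *)
have det : (k2 * l1 - k1 * l2) * (l2 * s2 - l1 * s1)
           - (k1 * l2 * s2 - k2 * l1 * s1) * (l1 - l2) != 0.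
  have -> : (k2 * l1 - k1 * l2) * (l2 * s2 - l1 * s1)
           - (k1 * l2 * s2 - k2 * l1 * s1) * (l1 - l2)
         = l1 * l2 * (k2 - k1) * (s2 - s1) by ring.
  by rewrite !mulf_neq0 // subr_eq0 eq_sym.
exists (Mobius det) => -[x|] /=.
- have den : (l1 - l2) * q.[x] + (l2 * s2 - l1 * s1) = (k2 - k1) * D.[x].
    transitivity (l1 * (q.[x] - s1) - l2 * (q.[x] - s2)); first by ring.
    by rewrite -(level_relation_horner x h1) -(level_relation_horner x h2); ring.
  have num : (k2 * l1 - k1 * l2) * q.[x] + (k1 * l2 * s2 - k2 * l1 * s1)
             = (k2 - k1) * P.[x].
    transitivity (k2 * (l1 * (q.[x] - s1)) - k1 * (l2 * (q.[x] - s2))); first by ring.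
    by rewrite -(level_relation_horner x h1) -(level_relation_horner x h2); ring.
  rewrite den num mulf_eq0 (negbTE k12) /=.
  by have [//|D_neq0] := eqVneq D.[x] 0; congr Some; field; rewrite k12 D_neq0.
- have den : l1 - l2 = (k2 - k1) * D`_m / q`_m.
    apply: (mulIf L_neq0); rewrite divfK //.
    transitivity (l1 * q`_m - l2 * q`_m); first by ring.
    by rewrite -(top _ _ _ h1) -(top _ _ _ h2); ring.
  have num : k2 * l1 - k1 * l2 = (k2 - k1) * P`_m / q`_m.
    apply: (mulIf L_neq0); rewrite divfK //.
    transitivity (k2 * (l1 * q`_m) - k1 * (l2 * q`_m)); first by ring.
    by rewrite -(top _ _ _ h1) -(top _ _ _ h2); ring.
  rewrite den num !mulf_eq0 invr_eq0 (negbTE k12) (negbTE L_neq0) orbF /=.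
  by have [//|D_neq0] := eqVneq D`_m 0; congr Some; field; rewrite k12 D_neq0 L_neq0.
Qed.

Lemma Cov0_Some (R : realType) (q : {poly C R}) x v :
  Cov0 q (Some x) v -> exists2 w, v = Some w & q.[x] = q.[w].
Proof. by case: v => [w|] //= hw; exists w => //; case: hw => [[_ ->]|[-> _]]. Qed.

Section Conjugacy.
Variables (R : realType) (n : nat) (q1 q2 : {poly C R}) (J1 J2 phi : mobius R).
Hypotheses (n_gt2 : (2 < n)%N) (size_q1 : size q1 = n.+1) (size_q2 : size q2 = n.+1).
Hypothesis J2_inv : involutive (mob_app J2).
Hypothesis phi_conj : corr_eq (corr_comp (graph (mob_app J2)) (Cov0 q2))
  (mob_conj_corr phi (corr_comp (graph (mob_app J1)) (Cov0 q1))).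

Local Notation P := (pullback_num phi n q2).
Local Notation D := (mob_den phi ^+ n).
Local Notation pullback x := (q2.[(mob_num phi).[x] / (mob_den phi).[x]]).

Lemma conj_Cov0 u t : Cov0 q1 u t ->
  exists2 v, Cov0 q2 (mob_app phi u) v & mob_app J2 v = mob_app phi (mob_app J1 t).
Proof.
move=> hut; have /(phi_conj _ _).2[v [hv Jv]] : mob_conj_corr phi
    (corr_comp (graph (mob_app J1)) (Cov0 q1)) (mob_app phi u) (mob_app phi (mob_app J1 t)).
  by exists (mob_app J1 t); split=> //; exists u; split=> //; exists t.
by exists v.
Qed.

Lemma pullback_eq_on_fiber x x' y :
  x != y -> x' != y -> q1.[x] = q1.[y] -> q1.[x'] = q1.[y] ->
  (mob_den phi).[x] != 0 -> (mob_den phi).[x'] != 0 -> pullback x = pullback x'.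
Proof.
move=> xy x'y qx qx' den_x den_x'.
have [v] := conj_Cov0 (or_introl (conj xy qx) : Cov0 q1 (Some x) (Some y)).
have [v'] := conj_Cov0 (or_introl (conj x'y qx') : Cov0 q1 (Some x') (Some y)).
rewrite !mob_app_SomeE (negbTE den_x) (negbTE den_x').
move=> /Cov0_Some[w' -> ->] Jw' /Cov0_Some[w -> ->].
by rewrite -Jw' => /(can_inj J2_inv) [->].
Qed.

Lemma pullback_const_on_fiber (rs : seq (C R)) s : uniq rs -> (2 < size rs)%N ->
  (forall r, r \in rs -> q1.[r] = s /\ (mob_den phi).[r] != 0) ->
  exists k, forall r, r \in rs -> pullback r = k.
Proof.
case: rs => [//|r0 rs] uniq_rs size_rs fiber; exists (pullback r0) => r r_rs.
have [y y_rs] := exists_mem_notin (t := [:: r; r0]) uniq_rs size_rs.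
rewrite !inE negb_or => /andP[yr yr0].
have [qr den_r] := fiber r r_rs; have [qr0 den_r0] := fiber r0 (mem_head _ _).
have [qy _] := fiber y y_rs.
by apply: (pullback_eq_on_fiber (y := y)); rewrite ?qr ?qr0 ?qy // eq_sym.
Qed.

Lemma pullback_level_relation s :
  (forall z, q1.[z] = s -> ~~ root (q1^`() * mob_den phi) z) ->
  exists k l, l != 0 /\ P - k *: D = l *: (q1 - s%:P).
Proof.
move=> generic_s.
have noncrit z : root q1^`() z -> q1.[z] != s.
  by apply: contraL => /eqP /generic_s; rewrite rootM negb_or => /andP[].
have [rs uniq_rs def_p] := separable_normal (separable_sub_noncritical noncrit).
set p := q1 - s%:P in def_p.
have size_p : size p = n.+1.
  rewrite size_polyDl ?size_polyN size_q1 //; apply: leq_ltn_trans (size_polyC_leq1 s) _; lia.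
have lc_neq0 : lead_coef p != 0 by rewrite lead_coef_eq0 -size_poly_eq0 size_p.
have size_rs : size rs = n.
  by apply/eqP; rewrite -eqSS -size_p def_p size_scale // size_prod_XsubC.
have fiber r : r \in rs -> q1.[r] = s /\ (mob_den phi).[r] != 0.
  move=> r_rs; have /rootP : root p r by rewrite def_p rootZ // root_prod_XsubC.
  rewrite hornerD hornerN hornerC => /eqP; rewrite subr_eq0 => /eqP qr; split=> //.
  by have := generic_s r qr; rewrite rootM negb_or => /andP[].
have rs_gt2 : (2 < size rs)%N by rewrite size_rs.
have [k hk] := pullback_const_on_fiber uniq_rs rs_gt2 fiber.
have size_q2' : (size q2 <= n.+1)%N by rewrite size_q2.
have [l' hl'] : exists l', P - k *: D = l' *: \prod_(r <- rs) ('X - r%:P).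
  apply: eq_scale_prod_XsubC => //.
    apply: leq_trans (size_polyD _ _) _; rewrite size_rs size_polyN geq_max size_pullback_num.
    exact: leq_trans (size_scale_leq _ _) (size_exp_linear _ (size_mob_den _)).
  apply/allP => r r_rs; have [_ den_r] := fiber r r_rs.
  by apply: root_pullback_num_sub; rewrite ?hk.
have prod_p : \prod_(r <- rs) ('X - r%:P) = (lead_coef p)^-1 *: p.
  by rewrite {2}def_p scalerA mulVf // scale1r.
exists k, (l' / lead_coef p); split; last by rewrite hl' prod_p scalerA.
rewrite mulf_eq0 invr_eq0 (negbTE lc_neq0) orbF; apply: contra_eqN hl' => /eqP ->.
rewrite scale0r subr_eq0; apply/eqP => /(pullback_num_eq_scale size_q2') q2_const.
by move: size_q2; rewrite q2_const size_polyC; have := leq_b1 (k != 0); lia.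
Qed.

Lemma covering_equivalent_of_conj : covering_equivalent q1 q2.
Proof.
have n_gt0 : (0 < n)%N by apply: ltnW (ltnW n_gt2).
have q1'_neq0 : q1^`() != 0 by apply: deriv_neq0; rewrite size_q1.
(* [B] holds the critical values of [q1] and its value at the pole of [phi]. *)
have [B hB] := root_values_finite q1 (mulf_neq0 q1'_neq0 (mob_den_neq0 phi)).
have generic s : s \notin B -> forall z, q1.[z] = s -> ~~ root (q1^`() * mob_den phi) z.
  by move=> sB z qz; apply: contraNN sB => /hB; rewrite qz.
have [s1 s1B] := exists_notin B.
have [s2] := exists_notin (s1 :: B); rewrite inE negb_or eq_sym => /andP[s12 s2B].
have [k1 [l1 [l1_neq0 h1]]] := pullback_level_relation (generic s1 s1B).
have [k2 [l2 [l2_neq0 h2]]] := pullback_level_relation (generic s2 s2B).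
have [psi hpsi] := frac_sphere_eq_mobius_comp n_gt0 size_q1 l1_neq0 l2_neq0 s12 h1 h2.
exists (mob_inv phi), psi => z.
by rewrite -{1}(mob_invK phi z) (poly_sphere_mob_app _ n_gt0) ?size_q2 // hpsi.
Qed.

End Conjugacy.

Lemma covering_equivalent_quadratic (R : realType) (q1 q2 : {poly C R}) :
  size q1 = 3 -> size q2 = 3 -> covering_equivalent q1 q2.
Proof.
have horner3 (q : {poly C R}) x : size q = 3 -> q.[x] = q`_0 + q`_1 * x + q`_2 * x ^+ 2.
  by move=> sq; rewrite horner_coef sq !big_ord_recr big_ord0 /= add0r mulr1.
move=> s1 s2; have l1 := coef_size_pred_neq0 s1; have l2 := coef_size_pred_neq0 s2.
pose h (q : {poly C R}) := q`_1 / (2 * q`_2).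
pose k (q : {poly C R}) := q`_0 - q`_1 ^+ 2 / (4 * q`_2).
have det_phi : (1 : C R) * 1 - (h q2 - h q1) * 0 != 0.
  by rewrite mulr0 subr0 mulr1 oner_eq0.
have det_psi : q2`_2 / q1`_2 * 1 - (k q2 - k q1 * (q2`_2 / q1`_2)) * 0 != 0.
  by rewrite mulr0 subr0 mulr1 mulf_neq0 // invr_eq0.
exists (Mobius det_phi), (Mobius det_psi) => -[x|] /=; last by rewrite !eqxx.
rewrite !mul0r !add0r oner_eq0 /= mul0r add0r oner_eq0 /=; congr Some.
by rewrite !horner3 // /h /k; field; rewrite l1 l2.
Qed.

Theorem mainTheorem8 (R : realType) (d : nat) (J1 J2 : mobius R)
  (q1 q2 : {poly C R}) :
  (0 < d)%N ->
  mob_involution J1 -> mob_involution J2 ->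
  size q1 = d.+2 -> size q2 = d.+2 ->
  conformally_conjugate (corr_comp (graph (mob_app J1)) (Cov0 q1))
                        (corr_comp (graph (mob_app J2)) (Cov0 q2)) ->
  conformally_conjugate (graph (mob_app J1)) (graph (mob_app J2))
  /\ covering_equivalent q1 q2.
Proof.
move=> d_gt0 J1_inv J2_inv size_q1 size_q2 [phi phi_conj].
split; first exact: mob_involution_conjugate.
have [d1|d_neq1] := eqVneq d 1%N.
  by apply: covering_equivalent_quadratic; rewrite ?size_q1 ?size_q2 d1.
have d_gt1 : (2 < d.+1)%N by rewrite ltnS ltn_neqAle eq_sym d_neq1.
exact: covering_equivalent_of_conj d_gt1 size_q1 size_q2 J2_inv.1 phi_conj.
Qed.
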